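(* For $n\ge1$ let $R_n=\{(x,y)\in\mathbb R^2: x-1/n<y<x+1/n\}$, and let $R$ be the pro-set given by the inverse system $(R_n)_{n\ge1}$ with inclusion maps, equipped with the monomorphism $R\to\mathbb R\times\mathbb R$ in $\operatorname{Pro}(\mathbf{Set})$ induced by the inclusions $R_n\subseteq\mathbb R^2$. Then $R$ is a categorical equivalence relation on $\mathbb R$ in $\operatorname{Pro}(\mathbf{Set})$, but it is not the kernel pair of any morphism in $\operatorname{Pro}(\mathbf{Set})$: every morphism $f\colon\mathbb R\to X$ in $\operatorname{Pro}(\mathbf{Set})$ whose kernel pair contains $R$ has kernel pair all of $\mathbb R\times\mathbb R$, while $R\to\mathbb R\times\mathbb R$ is not an isomorphism. In particular, $\operatorname{Pro}(\mathbf{Set})$ is not Barr exact.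
   Context: For a category $\mathcal C$, $\operatorname{Pro}(\mathcal C)$ is its pro-completion: objects are inverse systems, i.e. functors $X\colon \mathcal I_X^{op}\to\mathcal C$ with $\mathcal I_X$ a small filtered category, and $\operatorname{Hom}_{\operatorname{Pro}(\mathcal C)}(X,Y)=\varprojlim_{j\in\mathcal I_Y}\varinjlim_{i\in\mathcal I_X}\mathcal C(X_i,Y_j)$; sets are regarded as one-index inverse systems. A categorical equivalence relation on an object $X$ of a finitely complete category $\mathcal C$ is a monomorphism $R\to X\times X$ such that $\mathcal C(U,R)$ is an equivalence relation on $\mathcal C(U,X)$ for all $U$. The kernel pair of $f\colon X\to Y$ is the pullback $X\times_YX\to X\times X$. A regular category is Barr exact if every categorical equivalence relation is a kernel pair. *)

From Stdlib Require Import Reals Lra Lia ProofIrrelevance.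
Open Scope R_scope.

Set Implicit Arguments.
Set Universe Polymorphism.

(** Morphisms of I are composed diagrammatically: [pcomp u v : phom i k]
    for [u : phom i j], [v : phom j k].  The functor is contravariant:
    [pmap u : pobj j -> pobj i] for [u : phom i j]. *)
Record ProSet := {
  pidx : Type;
  phom : pidx -> pidx -> Type;
  pid : forall i, phom i i;
  pcomp : forall i j k, phom i j -> phom j k -> phom i k;
  pcomp_id_l : forall i j (u : phom i j), pcomp (pid i) u = u;
  pcomp_id_r : forall i j (u : phom i j), pcomp u (pid j) = u;
  pcomp_assoc : forall i j k l (u : phom i j) (v : phom j k) (w : phom k l),
      pcomp (pcomp u v) w = pcomp u (pcomp v w);
  pfilt_ne : inhabited pidx;
  pfilt_up : forall i j, exists k, inhabited (phom i k) /\ inhabited (phom j k);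
  pfilt_eq : forall i j (u v : phom i j), exists k (w : phom j k),
      pcomp u w = pcomp v w;
  pobj : pidx -> Type;
  pmap : forall i j, phom i j -> pobj j -> pobj i;
  pmap_id : forall i (x : pobj i), pmap (pid i) x = x;
  pmap_comp : forall i j k (u : phom i j) (v : phom j k) (x : pobj k),
      pmap (pcomp u v) x = pmap u (pmap v x)
}.

Arguments pcomp {p i j k}.
Arguments pmap {p i j}.
Arguments pid {p}.

(** Equality in the filtered colimit colim_{i in I_X} Set(X_i, T). *)
Definition cl_eq (X : ProSet) (T : Type)
    (i : pidx X) (g : pobj X i -> T) (i' : pidx X) (g' : pobj X i' -> T) : Prop :=
  exists k (a : phom X i k) (b : phom X i' k),
    forall x : pobj X k, g (pmap a x) = g' (pmap b x).

(** A morphism X -> Y of Pro(Set) is an element of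
    lim_j colim_i Set(X_i, Y_j); we represent it by a choice of a
    representative (src j, fn j) in each colimit, subject to the
    compatibility condition [is_hom]; two representatives are identified
    by [heq]. *)
Record PreHom (X Y : ProSet) := {
  src : pidx Y -> pidx X;
  fn : forall j, pobj X (src j) -> pobj Y j
}.

Definition is_hom (X Y : ProSet) (f : PreHom X Y) : Prop :=
  forall j j' (u : phom Y j j'),
    cl_eq X (src f j') (fun x => pmap u (fn f j' x)) (src f j) (fn f j).

Definition heq (X Y : ProSet) (f g : PreHom X Y) : Prop :=
  forall j, cl_eq X (src f j) (fn f j) (src g j) (fn g j).

Definition hcomp (X Y Z : ProSet) (g : PreHom Y Z) (f : PreHom X Y) : PreHom X Z :=
  {| src := fun k => src f (src g k);
     fn := fun k x => fn g k (fn f (src g k) x) |}.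

Definition idh (X : ProSet) : PreHom X X :=
  {| src := fun j => j; fn := fun j x => x |}.

Definition pro_mono (X Y : ProSet) (m : PreHom X Y) : Prop :=
  forall (W : ProSet) (a b : PreHom W X), is_hom a -> is_hom b ->
    heq (hcomp m a) (hcomp m b) -> heq a b.

Definition pro_iso (X Y : ProSet) (m : PreHom X Y) : Prop :=
  exists g : PreHom Y X, is_hom g /\ heq (hcomp g m) (idh X) /\ heq (hcomp m g) (idh Y).

Definition is_pullback (P X Y Z : ProSet) (p1 : PreHom P X) (p2 : PreHom P Y)
    (f : PreHom X Z) (g : PreHom Y Z) : Prop :=
  is_hom p1 /\ is_hom p2 /\ heq (hcomp f p1) (hcomp g p2) /\
  forall (W : ProSet) (a : PreHom W X) (b : PreHom W Y),
    is_hom a -> is_hom b -> heq (hcomp f a) (hcomp g b) ->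
    exists h : PreHom W P, is_hom h /\ heq (hcomp p1 h) a /\ heq (hcomp p2 h) b /\
      forall h' : PreHom W P, is_hom h' -> heq (hcomp p1 h') a -> heq (hcomp p2 h') b ->
        heq h' h.

Definition cst (S : Type) : ProSet.
Proof.
  refine {| pidx := unit; phom := fun _ _ => unit; pid := fun _ => tt;
            pcomp := fun _ _ _ _ _ => tt;
            pobj := fun _ => S; pmap := fun _ _ _ x => x |};
  intros; repeat match goal with u : unit |- _ => destruct u end; try reflexivity.
  - exact (inhabits tt).
  - exists tt; split; exact (inhabits tt).
  - exists tt, tt; reflexivity.
Defined.

Definition cmap (S T : Type) (h : S -> T) : PreHom (cst S) (cst T) :=
  @Build_PreHom (cst S) (cst T) (fun _ => tt) (fun _ (x : S) => h x).

(** The product R x R in Pro(Set) is the constant pro-set on R * R,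
    with projections induced by fst and snd. *)
Definition RR : ProSet := cst (R * R).
Definition pr1 : PreHom RR (cst R) := cmap (@fst R R).
Definition pr2 : PreHom RR (cst R) := cmap (@snd R R).

Definition cat_equiv_rel (T : Type) (E : ProSet) (m : PreHom E (cst (T * T))) : Prop :=
  is_hom m /\ pro_mono m /\
  forall U : ProSet,
    let rel := fun a b : PreHom U (cst T) =>
      exists r : PreHom U E, is_hom r /\
        heq (hcomp (cmap (@fst T T)) (hcomp m r)) a /\
        heq (hcomp (cmap (@snd T T)) (hcomp m r)) b in
    (forall a, is_hom a -> rel a a) /\
    (forall a b, is_hom a -> is_hom b -> rel a b -> rel b a) /\
    (forall a b c, is_hom a -> is_hom b -> is_hom c -> rel a b -> rel b c -> rel a c).

(** * The pro-set R = (R_n)_{n >= 1}; index k : nat stands for n = k + 1. *)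
Definition Rn (k : nat) : Type :=
  { p : R * R | fst p - / (INR k + 1) < snd p < fst p + / (INR k + 1) }.

Lemma inv_le_succ (i k : nat) : (i <= k)%nat -> / (INR k + 1) <= / (INR i + 1).
Proof.
  intro H. apply Rinv_le_contravar.
  - pose proof (pos_INR i); lra.
  - apply le_INR in H; lra.
Qed.

Definition Rn_incl (i k : nat) (H : (i <= k)%nat) (p : Rn k) : Rn i.
Proof.
  destruct p as [p Hp]. exists p.
  pose proof (inv_le_succ H). destruct Hp; split; lra.
Defined.

Definition Rpro : ProSet.
Proof.
  refine {| pidx := nat; phom := fun i k => (i <= k)%nat;
            pid := fun i => le_n i;
            pcomp := fun i j k u v => Nat.le_trans i j k u v;
            pobj := Rn; pmap := Rn_incl |}.
  - intros; apply proof_irrelevance.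
  - intros; apply proof_irrelevance.
  - intros; apply proof_irrelevance.
  - exact (inhabits 0%nat).
  - intros i j; exists (Nat.max i j); split; constructor; lia.
  - intros i j u v; exists j, (le_n j); apply proof_irrelevance.
  - intros i [p Hp]; unfold Rn_incl; simpl; f_equal; apply proof_irrelevance.
  - intros i j k u v [p Hp]; unfold Rn_incl; simpl; f_equal; apply proof_irrelevance.
Defined.

(** The monomorphism R -> R x R induced by the inclusions R_n ⊆ R^2
    (represented by the inclusion of R_1). *)
Definition Rm : PreHom Rpro RR :=
  @Build_PreHom Rpro RR (fun _ => 0%nat) (fun _ (p : Rn 0) => proj1_sig p).

(* A morphism U -> R of pro-sets gives, at each level n, points of R_n; the
   pair of maps a, b : U -> ℝ is related by R exactly when their values are
   1/n-close at every level n.  This relation is reflexive and symmetric, and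
   transitive because R_{2n} ∘ R_{2n} ⊆ R_n.  Conversely, a morphism f out
   of the set ℝ whose kernel pair contains R identifies, at each level, all
   points closer than some 1/n, hence is constant since any two reals are
   joined by a chain of such steps.  Its kernel pair is then all of ℝ × ℝ,
   which differs from R because (0, 2) ∉ R_1. *)
From Stdlib Require Import Reals Lra ProofIrrelevance ClassicalEpsilon.
Set Implicit Arguments.
Set Universe Polymorphism.
Unset Universe Minimization ToSet.
Open Scope R_scope.

Section FilteredColimit.
Variable X : ProSet.

Lemma cl_ext T i (g g' : pobj X i -> T) :
  (forall x, g x = g' x) -> cl_eq X i g i g'.
Proof. intro H. exists i, (pid i), (pid i). intro x. apply H. Qed.

Lemma cl_refl T i (g : pobj X i -> T) : cl_eq X i g i g.
Proof. now apply cl_ext. Qed.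

Lemma cl_sym T i (g : pobj X i -> T) i' (g' : pobj X i' -> T) :
  cl_eq X i g i' g' -> cl_eq X i' g' i g.
Proof. intros [k [a [b H]]]. exists k, b, a. intro x. symmetry. apply H. Qed.

Lemma cl_trans T i (g : pobj X i -> T) i' (g' : pobj X i' -> T)
    i'' (g'' : pobj X i'' -> T) :
  cl_eq X i g i' g' -> cl_eq X i' g' i'' g'' -> cl_eq X i g i'' g''.
Proof.
  intros [k1 [a1 [b1 H1]]] [k2 [a2 [b2 H2]]].
  destruct (pfilt_up X k1 k2) as [k3 [[c1] [c2]]].
  destruct (pfilt_eq X _ _ (pcomp b1 c1) (pcomp a2 c2)) as [k4 [w Hw]].
  exists k4, (pcomp (pcomp a1 c1) w), (pcomp (pcomp b2 c2) w). intro x.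
  transitivity (g' (pmap (pcomp (pcomp b1 c1) w) x)).
  - rewrite !pmap_comp. apply H1.
  - rewrite Hw, !pmap_comp. apply H2.
Qed.

Lemma cl_restrict T i k (a : phom X i k) (g : pobj X i -> T) :
  cl_eq X k (fun x => g (pmap a x)) i g.
Proof. exists k, (pid k), a. intro x. now rewrite pmap_id. Qed.

Lemma cl_map T U (h : T -> U) i (g : pobj X i -> T) i' (g' : pobj X i' -> T) :
  cl_eq X i g i' g' -> cl_eq X i (fun x => h (g x)) i' (fun x => h (g' x)).
Proof. intros [k [a [b H]]]. exists k, a, b. intro x. now rewrite H. Qed.

Lemma cl_inj T U (h : T -> U) i (g : pobj X i -> T) i' (g' : pobj X i' -> T) :
  (forall y z, h y = h z -> y = z) ->
  cl_eq X i (fun x => h (g x)) i' (fun x => h (g' x)) -> cl_eq X i g i' g'.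
Proof. intros Hh [k [a [b H]]]. exists k, a, b. intro x. apply Hh, H. Qed.

Lemma cl_prod T U i (g : pobj X i -> T * U) i' (g' : pobj X i' -> T * U) :
  cl_eq X i (fun x => fst (g x)) i' (fun x => fst (g' x)) ->
  cl_eq X i (fun x => snd (g x)) i' (fun x => snd (g' x)) ->
  cl_eq X i g i' g'.
Proof.
  intros [k1 [a1 [b1 H1]]] [k2 [a2 [b2 H2]]].
  destruct (pfilt_up X k1 k2) as [k3 [[c1] [c2]]].
  destruct (pfilt_eq X _ _ (pcomp a1 c1) (pcomp a2 c2)) as [k4 [w Hw]].
  destruct (pfilt_eq X _ _ (pcomp (pcomp b1 c1) w) (pcomp (pcomp b2 c2) w))
    as [k5 [w' Hw']].
  exists k5, (pcomp (pcomp (pcomp a1 c1) w) w'), (pcomp (pcomp (pcomp b1 c1) w) w').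
  intro x. apply injective_projections.
  - rewrite !pmap_comp. apply H1.
  - rewrite Hw, Hw', !pmap_comp. apply H2.
Qed.

Lemma cl_witness T i (g : pobj X i -> T) i' (g' : pobj X i' -> T) :
  cl_eq X i g i' g' -> {k : pidx X & {a : phom X i k & {b : phom X i' k |
    forall x, g (pmap a x) = g' (pmap b x)}}}.
Proof.
  intro H. apply constructive_indefinite_description in H as [k H].
  apply constructive_indefinite_description in H as [a H].
  apply constructive_indefinite_description in H. exact (existT _ k (existT _ a H)).
Qed.

End FilteredColimit.

Lemma cl_transport (X Y : ProSet) (a : PreHom X Y) : is_hom a ->
  forall T i (g : pobj Y i -> T) i' (g' : pobj Y i' -> T),
  cl_eq Y i g i' g' ->
  cl_eq X (src a i) (fun x => g (fn a i x)) (src a i') (fun x => g' (fn a i' x)).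
Proof.
  intros Ha T i g i' g' [k [al [be H]]].
  eapply cl_trans; [apply cl_sym, (cl_map g (Ha _ _ al))|].
  eapply cl_trans; [|apply (cl_map g' (Ha _ _ be))].
  apply cl_ext. intro x. apply H.
Qed.

Section Morphisms.
Variables X Y Z : ProSet.

Lemma heq_refl (f : PreHom X Y) : heq f f.
Proof. intro j. apply cl_refl. Qed.

Lemma heq_sym (f g : PreHom X Y) : heq f g -> heq g f.
Proof. intros H j. apply cl_sym, H. Qed.

Lemma heq_trans (f g h : PreHom X Y) : heq f g -> heq g h -> heq f h.
Proof. intros H1 H2 j. eapply cl_trans; [apply H1|apply H2]. Qed.

Lemma heq_compl (g : PreHom Y Z) (a a' : PreHom X Y) :
  heq a a' -> heq (hcomp g a) (hcomp g a').
Proof. intros H k. exact (cl_map (fn g k) (H (src g k))). Qed.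

Lemma heq_compr (g g' : PreHom Y Z) (a : PreHom X Y) :
  is_hom a -> heq g g' -> heq (hcomp g a) (hcomp g' a).
Proof. intros Ha H k. exact (cl_transport Ha (H k)). Qed.

Lemma is_hom_comp (g : PreHom Y Z) (a : PreHom X Y) :
  is_hom g -> is_hom a -> is_hom (hcomp g a).
Proof. intros Hg Ha k k' u. exact (cl_transport Ha (Hg k k' u)). Qed.

Lemma is_hom_idh : is_hom (idh X).
Proof. intros j j' u. exists j', (pid j'), u. intro x. simpl. now rewrite pmap_id. Qed.

End Morphisms.

Lemma heq_RR (X : ProSet) (m m' : PreHom X RR) :
  heq (hcomp pr1 m) (hcomp pr1 m') -> heq (hcomp pr2 m) (hcomp pr2 m') -> heq m m'.
Proof. intros H1 H2 []. apply cl_prod; [exact (H1 tt)|exact (H2 tt)]. Qed.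

Lemma pullback_hom_ext (P X Y Z W : ProSet) (p1 : PreHom P X) (p2 : PreHom P Y)
    (f : PreHom X Z) (g : PreHom Y Z) (h h' : PreHom W P) :
  is_pullback p1 p2 f g -> is_hom h -> is_hom h' ->
  heq (hcomp p1 h) (hcomp p1 h') -> heq (hcomp p2 h) (hcomp p2 h') -> heq h h'.
Proof.
  intros [Hp1 [Hp2 [Hfg Hu]]] Hh Hh' H1 H2.
  destruct (Hu W (hcomp p1 h') (hcomp p2 h') (is_hom_comp Hp1 Hh')
              (is_hom_comp Hp2 Hh') (heq_compr Hh' Hfg)) as [h0 [_ [_ [_ Huniq]]]].
  apply (heq_trans (Huniq h Hh H1 H2)), heq_sym.
  exact (Huniq h' Hh' (heq_refl _) (heq_refl _)).
Qed.

Lemma pullback_comp_heq (P X Y Z W : ProSet) (p1 : PreHom P X) (p2 : PreHom P Y)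
    (f : PreHom X Z) (g : PreHom Y Z) (h : PreHom W P) a b :
  is_pullback p1 p2 f g -> is_hom h ->
  heq (hcomp p1 h) a -> heq (hcomp p2 h) b -> heq (hcomp f a) (hcomp g b).
Proof.
  intros [_ [_ [Hfg _]]] Hh Ha Hb.
  apply (heq_trans (heq_compl f (heq_sym Ha))), (heq_trans (heq_compr Hh Hfg)).
  exact (heq_compl g Hb).
Qed.

Lemma locally_constant_const (T : Type) (phi : R -> T) d : 0 < d ->
  (forall x y, x - d < y < x + d -> phi x = phi y) -> forall x y, phi x = phi y.
Proof.
  intros Hd Hloc x y.
  assert (Hchain : forall e, Rabs e < d -> forall n, phi x = phi (x + INR n * e)).
  { intros e He n. induction n as [|n IH].
    - simpl. now rewrite Rmult_0_l, Rplus_0_r.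
    - rewrite IH, S_INR. apply Hloc. destruct (Rabs_def2 _ _ He). lra. }
  destruct (INR_unbounded (Rabs (y - x) / d)) as [n Hn].
  assert (Hdist : Rabs (y - x) < d * INR n).
  { replace (Rabs (y - x)) with (d * (Rabs (y - x) / d)) by (field; lra).
    now apply Rmult_lt_compat_l. }
  assert (Hn_pos : 0 < INR n).
  { pose proof (Rabs_pos (y - x)). nra. }
  replace y with (x + INR n * ((y - x) / INR n)) by (field; lra).
  apply Hchain. unfold Rdiv.
  rewrite Rabs_mult, Rabs_inv, (Rabs_right (INR n)) by lra.
  apply (Rmult_lt_reg_r (INR n)); [lra|].
  rewrite Rmult_assoc, Rinv_l, Rmult_1_r by lra. exact Hdist.
Qed.

Lemma width_pos k : 0 < / (INR k + 1).
Proof. apply Rinv_0_lt_compat. pose proof (pos_INR k). lra. Qed.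

Lemma width_double k : / (INR (S (k + k)) + 1) = / (INR k + 1) / 2.
Proof. rewrite S_INR, plus_INR. pose proof (pos_INR k). field. lra. Qed.

Lemma Rn_inj k (p q : Rn k) : proj1_sig p = proj1_sig q -> p = q.
Proof. destruct p, q; simpl; intros ->. f_equal. apply proof_irrelevance. Qed.

Lemma Rn_incl_val i k (H : (i <= k)%nat) (p : Rn k) :
  proj1_sig (Rn_incl H p) = proj1_sig p.
Proof. now destruct p. Qed.

Definition Rn_diag k (v : R) : Rn k.
Proof. exists (v, v). simpl. pose proof (width_pos k). lra. Defined.

Definition Rn_swap k (p : Rn k) : Rn k.
Proof.
  exists (snd (proj1_sig p), fst (proj1_sig p)).
  destruct p as [[a b] Hp]. simpl in *. lra.
Defined.

Definition Rn_glue k (p q : Rn (S (k + k)))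
    (H : snd (proj1_sig p) = fst (proj1_sig q)) : Rn k.
Proof.
  exists (fst (proj1_sig p), snd (proj1_sig q)).
  destruct p as [[a b] Hp], q as [[c d] Hq]; cbn [fst snd proj1_sig] in *.
  rewrite width_double in Hp, Hq. subst c. simpl. lra.
Defined.

Section ProSetR.
Variable U : ProSet.

Definition Rpt (r : PreHom U Rpro) m (y : pobj U (src r m)) : R * R :=
  proj1_sig (fn r m y).

Lemma Rpt_cl_of_hom (r : PreHom U Rpro) : is_hom r ->
  forall j j', (j <= j')%nat -> cl_eq U (src r j') (Rpt r j') (src r j) (Rpt r j).
Proof.
  intros Hr j j' u.
  eapply cl_trans; [|exact (cl_map (fun p : Rn j => proj1_sig p) (Hr j j' u))].
  apply cl_ext. intro x. symmetry. apply Rn_incl_val.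
Qed.

Lemma hom_of_Rpt_cl (r : PreHom U Rpro) :
  (forall j j', (j <= j')%nat -> cl_eq U (src r j') (Rpt r j') (src r j) (Rpt r j)) ->
  is_hom r.
Proof.
  intros H j j' u. apply cl_inj with (h := fun p : Rn j => proj1_sig p); [exact (@Rn_inj j)|].
  eapply cl_trans; [|exact (H j j' u)].
  apply cl_ext. intro x. apply Rn_incl_val.
Qed.

Lemma Rpro_hom_ext (a b : PreHom U Rpro) : is_hom a -> is_hom b ->
  cl_eq U (src a 0%nat) (Rpt a 0%nat) (src b 0%nat) (Rpt b 0%nat) -> heq a b.
Proof.
  intros Ha Hb H j.
  apply cl_inj with (h := fun p : Rn j => proj1_sig p); [exact (@Rn_inj j)|].
  eapply cl_trans; [exact (Rpt_cl_of_hom Ha (le_0_n j))|].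
  eapply cl_trans; [exact H|].
  exact (cl_sym (Rpt_cl_of_hom Hb (le_0_n j))).
Qed.

(* The relation that [Rm] induces on maps [U -> ℝ], read off levelwise. *)
Definition lies_over (r : PreHom U Rpro) (a b : PreHom U (cst R)) : Prop :=
  forall m, cl_eq U (src r m) (fun y => fst (Rpt r m y)) (src a tt) (fn a tt) /\
            cl_eq U (src r m) (fun y => snd (Rpt r m y)) (src b tt) (fn b tt).

Lemma lies_over_rel (r : PreHom U Rpro) a b : lies_over r a b ->
  is_hom r /\ heq (hcomp (cmap (@fst R R)) (hcomp Rm r)) a /\
  heq (hcomp (cmap (@snd R R)) (hcomp Rm r)) b.
Proof.
  intro H. split; [|split; intros []; apply (H 0%nat)].
  apply hom_of_Rpt_cl. intros j j' _.
  destruct (H j) as [Ha Hb], (H j') as [Ha' Hb'].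
  apply cl_prod; eapply cl_trans; eauto using cl_sym.
Qed.

Lemma rel_lies_over (r : PreHom U Rpro) a b : is_hom r ->
  heq (hcomp (cmap (@fst R R)) (hcomp Rm r)) a ->
  heq (hcomp (cmap (@snd R R)) (hcomp Rm r)) b -> lies_over r a b.
Proof.
  intros Hr Ha Hb m.
  pose proof (Rpt_cl_of_hom Hr (le_0_n m)) as Hm.
  split; eapply cl_trans; [exact (cl_map (@fst R R) Hm)| exact (Ha tt)
                          |exact (cl_map (@snd R R) Hm)| exact (Hb tt)].
Qed.

Lemma lies_over_diag (a : PreHom U (cst R)) :
  lies_over (Build_PreHom U Rpro (fun _ => src a tt) (fun j x => Rn_diag j (fn a tt x)))
    a a.
Proof. split; apply cl_refl. Qed.

Lemma lies_over_swap (r : PreHom U Rpro) a b : lies_over r a b ->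
  lies_over (Build_PreHom U Rpro (src r) (fun j x => Rn_swap (fn r j x))) b a.
Proof. intros H m. split; apply (H m). Qed.

Lemma lies_over_glue (r1 r2 : PreHom U Rpro) a b c :
  lies_over r1 a b -> lies_over r2 b c ->
  exists r, lies_over r a c.
Proof.
  intros H1 H2.
  pose (w j := cl_witness (cl_trans (proj2 (H1 (S (j + j))))
                                    (cl_sym (proj1 (H2 (S (j + j))))))).
  exists (Build_PreHom U Rpro (fun j => projT1 (w j))
    (fun j x => Rn_glue j (fn r1 _ (pmap (projT1 (projT2 (w j))) x))
                          (fn r2 _ (pmap (proj1_sig (projT2 (projT2 (w j)))) x))
                          (proj2_sig (projT2 (projT2 (w j))) x))).
  intro m. split; simpl; eapply cl_trans.
  - exact (cl_restrict _ _ _ (projT1 (projT2 (w m))) (fun y => fst (Rpt r1 _ y))).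
  - exact (proj1 (H1 _)).
  - exact (cl_restrict _ _ _ (proj1_sig (projT2 (projT2 (w m))))
             (fun y => snd (Rpt r2 _ y))).
  - exact (proj2 (H2 _)).
Qed.

End ProSetR.

Lemma is_hom_Rm : is_hom Rm.
Proof. intros j j' u. exists 0%nat, (le_n 0), (le_n 0). reflexivity. Qed.

Lemma pro_mono_Rm : pro_mono Rm.
Proof. intros W a b Ha Hb H. exact (Rpro_hom_ext Ha Hb (H tt)). Qed.

Lemma cat_equiv_rel_Rm : cat_equiv_rel Rm.
Proof.
  split; [exact is_hom_Rm|split; [exact pro_mono_Rm|]].
  intro U; cbv zeta. split; [|split].
  - intros a _. eexists. apply lies_over_rel, lies_over_diag.
  - intros a b _ _ [r [Hr [Ha Hb]]].
    eexists. exact (lies_over_rel (lies_over_swap (rel_lies_over Hr Ha Hb))).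
  - intros a b c _ _ _ [r1 [Hr1 [Ha Hb]]] [r2 [Hr2 [Hb' Hc]]].
    destruct (lies_over_glue (rel_lies_over Hr1 Ha Hb) (rel_lies_over Hr2 Hb' Hc))
      as [r Hr].
    exists r. exact (lies_over_rel Hr).
Qed.

Lemma Rm_not_split_epi (g : PreHom RR Rpro) : ~ heq (hcomp Rm g) (idh RR).
Proof.
  intro H. destruct (H tt) as [k [a [b Hab]]]. specialize (Hab (0, 2)). cbn in Hab.
  revert Hab. destruct (fn g 0%nat _) as [q Hq]. cbn. intros ->.
  cbn in Hq. replace (/ (0 + 1)) with 1 in Hq by field. lra.
Qed.

(* [cst] lives in the lowest universes, whereas the pullbacks of the theorem
   test their universal property against pro-sets in larger ones. *)
Definition cst_at@{a b c} (S : Type@{c}) : ProSet@{a b c}.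
Proof.
  refine {| pidx := unit; phom := fun _ _ => unit; pid := fun _ => tt;
            pcomp := fun _ _ _ _ _ => tt;
            pobj := fun _ => S; pmap := fun _ _ _ x => x |};
  intros; repeat match goal with u : unit |- _ => destruct u end; try reflexivity.
  - exact (inhabits tt).
  - exists tt; split; exact (inhabits tt).
  - exists tt, tt; reflexivity.
Defined.

Definition cmap_at@{a b c d} (S : Type@{c}) (T : Type@{d}) (h : S -> T) :
  PreHom (cst_at@{a b c} S) (cst@{d} T) :=
  Build_PreHom (cst_at S) (cst T) (fun _ => tt) (fun _ (x : S) => h x).

Lemma is_hom_cmap_at S T (h : S -> T) : is_hom (cmap_at h).
Proof. intros j j' u. exists tt, tt, tt. reflexivity. Qed.

Lemma coequalizes_Rm_const (X : ProSet) (f : PreHom (cst R) X) :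
  heq (hcomp f (hcomp pr1 Rm)) (hcomp f (hcomp pr2 Rm)) ->
  heq (hcomp f (cmap_at (@fst R R))) (hcomp f (cmap_at (@snd R R))).
Proof.
  intros H j. exists tt, tt, tt. intros [x y].
  destruct (H j) as [k [a [b Hab]]].
  apply (locally_constant_const (fn f j) (width_pos k)).
  intros x' y' Hxy. exact (Hab (exist _ (x', y') Hxy)).
Qed.

Lemma kernel_pair_lift_RR (X K : ProSet) (f : PreHom (cst R) X)
    (p1 p2 : PreHom K (cst R)) : is_pullback p1 p2 f f ->
  heq (hcomp f (hcomp pr1 Rm)) (hcomp f (hcomp pr2 Rm)) ->
  exists g : PreHom RR K, is_hom g /\ heq (hcomp p1 g) pr1 /\ heq (hcomp p2 g) pr2.
Proof.
  intros [_ [_ [_ Hu]]] H.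
  destruct (Hu _ _ _ (is_hom_cmap_at _) (is_hom_cmap_at _) (coequalizes_Rm_const H))
    as [g [Hg [Hg1 [Hg2 _]]]].
  (* Reading [g] at the universe levels of [RR] must go through [cbn]: unifying
     the two copies of the constant pro-set would collapse the levels of [g]. *)
  exists (Build_PreHom RR K (fun j => (src g j : unit)) (fun j (x : R * R) => fn g j x)).
  split; [|split].
  - intros j j' u. destruct (Hg j j' u) as [k [a [b Hab]]].
    cbn in Hab. exists tt, tt, tt. exact Hab.
  - intro j. destruct (Hg1 j) as [k [a [b Hab]]].
    cbn in Hab. exists tt, tt, tt. exact Hab.
  - intro j. destruct (Hg2 j) as [k [a [b Hab]]].
    cbn in Hab. exists tt, tt, tt. exact Hab.
Qed.

Lemma kernel_pair_containing_Rm_full (X : ProSet) (f : PreHom (cst R) X)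
    (K : ProSet) (p1 p2 : PreHom K (cst R)) : is_pullback p1 p2 f f ->
  (exists h : PreHom Rpro K, is_hom h /\
     heq (hcomp p1 h) (hcomp pr1 Rm) /\ heq (hcomp p2 h) (hcomp pr2 Rm)) ->
  forall e : PreHom K RR, is_hom e ->
    heq (hcomp pr1 e) p1 -> heq (hcomp pr2 e) p2 -> pro_iso e.
Proof.
  intros Hpb [h [Hh [Hh1 Hh2]]] e He He1 He2.
  destruct (kernel_pair_lift_RR Hpb (pullback_comp_heq Hpb Hh Hh1 Hh2))
    as [g [Hg [Hg1 Hg2]]].
  exists g. split; [exact Hg|split].
  - apply (pullback_hom_ext Hpb (is_hom_comp Hg He) (is_hom_idh K)).
    + exact (heq_trans (heq_compr He Hg1) He1).
    + exact (heq_trans (heq_compr He Hg2) He2).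
  - apply heq_RR.
    + exact (heq_trans (heq_compr Hg He1) Hg1).
    + exact (heq_trans (heq_compr Hg He2) Hg2).
Qed.

Lemma Rm_not_iso : ~ pro_iso Rm.
Proof. intros [g [_ [_ H]]]. exact (Rm_not_split_epi H). Qed.

Lemma Rm_not_kernel_pair (X : ProSet) (f : PreHom (cst R) X) :
  ~ is_pullback (hcomp pr1 Rm) (hcomp pr2 Rm) f f.
Proof.
  intros Hpb.
  destruct (kernel_pair_lift_RR Hpb (proj1 (proj2 (proj2 Hpb)))) as [g [_ [H1 H2]]].
  apply (@Rm_not_split_epi g), heq_RR; [exact H1|exact H2].
Qed.

Theorem mainTheorem14 :
  cat_equiv_rel Rm /\
  (forall (X : ProSet) (f : PreHom (cst R) X), is_hom f ->
     forall (K : ProSet) (p1 p2 : PreHom K (cst R)), is_pullback p1 p2 f f ->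
       (exists h : PreHom Rpro K, is_hom h /\
          heq (hcomp p1 h) (hcomp pr1 Rm) /\ heq (hcomp p2 h) (hcomp pr2 Rm)) ->
       forall e : PreHom K RR, is_hom e ->
         heq (hcomp pr1 e) p1 -> heq (hcomp pr2 e) p2 -> pro_iso e) /\
  ~ pro_iso Rm /\
  (forall (X : ProSet) (f : PreHom (cst R) X), is_hom f ->
     ~ is_pullback (hcomp pr1 Rm) (hcomp pr2 Rm) f f).
Proof.
  split; [exact cat_equiv_rel_Rm|split; [|split; [exact Rm_not_iso|]]].
  - intros X f _. exact (@kernel_pair_containing_Rm_full X f).
  - intros X f _. exact (@Rm_not_kernel_pair X f).
Qed.
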